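(* Let $\Sigma$ be a mixing one-sided subshift of finite type and $L,L'\in\mathrm{QM}(\mathscr W)$. Then $L\sim L'$ if and only if $\bar L(\mathbf a)=\bar L'(\mathbf a)$ for every periodic word $\mathbf a$. Consequently $L\sim L'$ if and only if the restrictions of $L$ and $L'$ to periodic words differ by a bounded function.
   Context: $\Sigma=\{(x_n)_{n\ge0}:R_{x_nx_{n+1}}=1\}$ for an irreducible aperiodic $0/1$ matrix $R$ on alphabet $\mathscr A=\{1,\dots,d\}$. $\mathscr W$ is the set of finite allowed words (including the empty word), concatenation $\mathbf a\mathbf b$ being defined when allowed. $L:\mathscr W\to\mathbb R$ is a quasimorphism ($L\in\mathrm{QM}(\mathscr W)$) if $\sup|L(\mathbf a\mathbf b)-L(\mathbf a)-L(\mathbf b)|<\infty$ over concatenable pairs. $L\sim L'$ if $L-L'$ is bounded on $\mathscr W$. A nonempty word $\mathbf a=a_1\cdots a_n$ is periodic if $R_{a_na_1}=1$; for such $\mathbf a$, $\bar L(\mathbf a)=\lim_{k\to\infty}L(\mathbf a^k)/k$, where $\mathbf a^k$ is the $k$-fold concatenation. *)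

From HB Require Import structures.
From mathcomp Require Import all_boot all_order all_algebra.
From mathcomp Require Import all_classical all_reals all_analysis.
Set Implicit Arguments. Unset Strict Implicit. Unset Printing Implicit Defensive.
Import Order.TTheory GRing.Theory Num.Theory.
Import numFieldNormedType.Exports.
Local Open Scope ring_scope.

(* Alphabet {1,...,d} is represented by 'I_d; the transition matrix is an
   integer 0/1 matrix A : 'M[int]_d. *)

(* n-th power of a square matrix (works for every size d, including d = 0). *)
Definition mxpow (d : nat) (A : 'M[int]_d) (n : nat) : 'M[int]_d :=
  iter n (mulmx A) 1%:M.

Definition zero_one_mx (d : nat) (A : 'M[int]_d) : Prop :=
  forall i j, A i j = 0 \/ A i j = 1.

Definition irreducible_mx (d : nat) (A : 'M[int]_d) : Prop :=
  forall i j, exists n : nat, 0 < mxpow A n i j.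

(* aperiodic: the period gcd{ n >= 1 : (A^n)_{ii} > 0 } of every state is 1,
   i.e. the only common divisor of these return times is 1. *)
Definition aperiodic_mx (d : nat) (A : 'M[int]_d) : Prop :=
  forall (i : 'I_d) (p : nat),
    (forall n : nat, (0 < n)%N -> 0 < mxpow A n i i -> (p %| n)%N) -> p = 1%N.

Definition allowed (d : nat) (A : 'M[int]_d) (w : seq 'I_d) : bool :=
  sorted (fun x y => A x y == 1) w.

Definition quasimorphism (R : realType) (d : nat) (A : 'M[int]_d)
    (L : seq 'I_d -> R) : Prop :=
  exists C : R, forall a b : seq 'I_d, allowed A (a ++ b) ->
    `| L (a ++ b) - L a - L b | <= C.

Definition qm_equiv (R : realType) (d : nat) (A : 'M[int]_d)
    (L L' : seq 'I_d -> R) : Prop :=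
  exists C : R, forall w : seq 'I_d, allowed A w -> `| L w - L' w | <= C.

Definition periodic_word (d : nat) (A : 'M[int]_d) (a : seq 'I_d) : Prop :=
  match a with
  | [::] => False
  | x :: s => allowed A a /\ A (last x s) x = 1
  end.

Definition wpow (d : nat) (a : seq 'I_d) (k : nat) : seq 'I_d :=
  flatten (nseq k a).

Definition Lbar (R : realType) (d : nat) (L : seq 'I_d -> R) (a : seq 'I_d) : R :=
  limn (fun k : nat => L (wpow a k) / k%:R).

From mathcomp Require Import all_boot all_order all_algebra.
From mathcomp Require Import all_classical all_reals all_analysis.
From mathcomp Require Import ring lra.
Import Order.TTheory GRing.Theory Num.Theory.
Import numFieldNormedType.Exports.
Local Open Scope ring_scope.
Local Open Scope classical_set_scope.
Set Implicit Arguments. Unset Strict Implicit.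

(* For a periodic word a, the sequence k |-> L (a^k) is quasi-additive, so by a
   Fekete-type Cauchy argument L (a^k) / k converges and its limit Lbar L a lies
   within 2C of L a.  Applied to the quasimorphism D = L - L', this shows that D
   is bounded on periodic words iff Lbar D vanishes on them.  Mixing lets every
   allowed word w be closed up into a periodic word w c, the bridge c ranging
   over finitely many words, so a bound on periodic words propagates to all
   allowed words through the quasimorphism inequality for the pair (w, c). *)

Section RealSequences.
Variable R : realType.

Lemma cvgn_invn : (fun k : nat => k%:R^-1 : R) @ \oo --> 0.
Proof. by rewrite -cvg_shiftS; exact: cvg_harmonic. Qed.

Lemma cvgn_divn (C : R) : (fun k : nat => C / k%:R) @ \oo --> 0.
Proof. by rewrite -(mulr0 C); exact: cvgM (cvg_cst C) cvgn_invn. Qed.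

Lemma cvgn_div_bounded (v : nat -> R) (C : R) :
  (\forall k \near \oo, `|v k| <= C) -> (fun k => v k / k%:R) @ \oo --> 0.
Proof.
move=> vC; apply: (@squeeze_cvgr _ _ _ _ (fun k => - (C / k%:R)) (fun k => C / k%:R)).
- apply: filterS vC => k vkC.
  rewrite -ler_norml normrM normfV normr_nat.
  by rewrite ler_wpM2r // invr_ge0 ler0n.
- by rewrite -oppr0; apply: cvgN; exact: cvgn_divn.
- exact: cvgn_divn.
Qed.

Lemma cvgn_of_dist_le (f g : nat -> R) : g @ \oo --> 0 ->
  (forall m n, (0 < m)%N -> (0 < n)%N -> `|f m - f n| <= g m + g n) -> cvgn f.
Proof.
move=> g0 fg; apply/cauchy_cvgP/cauchy_ballP => e e0.
rewrite near_map2 -ball_normE /=.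
have e2 : 0 < e / 2 by rewrite divr_gt0.
have gsmall := cvgr0_norm_lt g g0 _ e2.
near=> m n.
have m0 : (0 < m)%N by near: m; exact: nbhs_infty_gt.
have n0 : (0 < n)%N by near: n; exact: nbhs_infty_gt.
have gm : `|g m| < e / 2 by near: m; exact: gsmall.
have gn : `|g n| < e / 2 by near: n; exact: gsmall.
apply: le_lt_trans (fg _ _ m0 n0) _.
by rewrite [e]splitr ltrD // (le_lt_trans (ler_norm _)).
Unshelve. all: by end_near.
Qed.

Lemma limn_dist_le (f : nat -> R) (y b : R) : cvgn f ->
  (\forall k \near \oo, `|f k - y| <= b) -> `|limn f - y| <= b.
Proof.
move=> cf fb; rewrite ler_distl; apply/andP; split.
- by apply: limr_ge => //; apply: filterS fb => k; rewrite ler_distl => /andP[].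
- by apply: limr_le => //; apply: filterS fb => k; rewrite ler_distl => /andP[].
Qed.

End RealSequences.

Section QuasiAdditive.
Variables (R : realType) (u : nat -> R) (C : R).
Hypothesis u_qadd : forall j k, `|u (j + k) - u j - u k| <= C.

Lemma qadd_ge0 : 0 <= C.
Proof. exact: le_trans (normr_ge0 _) (u_qadd 0 0). Qed.

Lemma qadd_mul m n : `|u (m * n) - m%:R * u n| <= m.+1%:R * C.
Proof.
elim: m => [|m IH].
  by have := u_qadd 0 0; rewrite mul0n mul0r subr0 mul1r subrr sub0r normrN.
have -> : u (m.+1 * n) - m.+1%:R * u n
    = (u (n + m * n) - u n - u (m * n)) + (u (m * n) - m%:R * u n).
  by rewrite mulSn -natr1; ring.
apply: le_trans (ler_normD _ _) _.
by rewrite -[m.+2%:R]natr1 mulrDl mul1r addrC lerD.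
Qed.

Lemma qadd_mul_dist m n : (0 < m)%N -> (0 < n)%N ->
  `|u (m * n) / (m * n)%:R - u n / n%:R| <= 2 * C / n%:R.
Proof.
move=> m0 n0; have mR : (0 : R) < m%:R by rewrite ltr0n.
have nR : (0 : R) < n%:R by rewrite ltr0n.
have -> : u (m * n) / (m * n)%:R - u n / n%:R
    = (u (m * n) - m%:R * u n) / (m%:R * n%:R).
  by rewrite natrM; field; rewrite !gt_eqF.
rewrite normrM normfV [`|_ * _|]gtr0_norm ?mulr_gt0 // ler_pdivrMr ?mulr_gt0 //.
apply: le_trans (qadd_mul m n) _.
have -> : 2 * C / n%:R * (m%:R * n%:R) = 2 * C * m%:R by field; rewrite gt_eqF.
have m1 : (1 : R) <= m%:R by rewrite ler1n.
have := qadd_ge0; rewrite -natr1; nra.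
Qed.

Lemma qadd_dist m n : (0 < m)%N -> (0 < n)%N ->
  `|u m / m%:R - u n / n%:R| <= 2 * C / m%:R + 2 * C / n%:R.
Proof.
move=> m0 n0; have um := qadd_mul_dist n0 m0; rewrite mulnC in um.
have un := qadd_mul_dist m0 n0.
have -> : u m / m%:R - u n / n%:R
    = (u (m * n) / (m * n)%:R - u n / n%:R) - (u (m * n) / (m * n)%:R - u m / m%:R).
  by ring.
by apply: le_trans (ler_normB _ _) _; rewrite addrC lerD.
Qed.

Lemma qadd_cvg : cvgn (fun k => u k / k%:R).
Proof. exact: cvgn_of_dist_le (cvgn_divn (2 * C)) qadd_dist. Qed.

Lemma qadd_lim_dist : `|limn (fun k => u k / k%:R) - u 1| <= 2 * C.
Proof.
apply: limn_dist_le qadd_cvg _; near=> k.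
have k0 : (0 < k)%N by near: k; exact: nbhs_infty_gt.
by have := qadd_mul_dist k0 (ltn0Sn 0); rewrite muln1 !divr1.
Unshelve. all: by end_near.
Qed.

End QuasiAdditive.

Section Words.
Variables (d : nat) (A : 'M[int]_d).
Local Notation step := (fun x y : 'I_d => A x y == 1).

Lemma wpowD (a : seq 'I_d) j k : wpow a (j + k) = wpow a j ++ wpow a k.
Proof. by elim: j => [|j IH] //=; rewrite /wpow /= -catA; congr (_ ++ _). Qed.

Lemma wpow1 (a : seq 'I_d) : wpow a 1 = a.
Proof. exact: cats0. Qed.

Lemma last_wpow (y : 'I_d) a k : last y (wpow a k.+1) = last y a.
Proof.
elim: k y => [|k IH] y; first by rewrite wpow1.
by rewrite [wpow a _]/= last_cat IH; case: a {IH}.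
Qed.

Lemma periodic_allowed a : periodic_word A a -> allowed A a.
Proof. by case: a => [|x s] // []. Qed.

Lemma periodic_wpow a k : periodic_word A a -> periodic_word A (wpow a k.+1).
Proof.
case: a => [|x s] //= [al lx].
have path_wpow n : path step x (s ++ wpow (x :: s) n).
  elim: n => [|n IH]; first by rewrite cats0.
  by rewrite cat_path al /= lx eqxx.
split; first exact: path_wpow.
by case: k => [|k]; rewrite ?cats0 // last_cat -/(wpow _ k.+1) last_wpow.
Qed.

Lemma allowed_wpow a k : periodic_word A a -> allowed A (wpow a k).
Proof. by case: k => [|k] // /(periodic_wpow k)/periodic_allowed. Qed.

Lemma periodic_close x s c : allowed A (x :: s) ->
  allowed A (last x s :: rcons c x) -> periodic_word A (x :: s ++ c).
Proof.
rewrite /allowed /= rcons_path => xs /andP[sc cx]; split.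
- by rewrite /= cat_path xs.
- by rewrite last_cat; apply/eqP.
Qed.

Hypothesis A01 : zero_one_mx A.

Lemma mxpow_path n i j : 0 < mxpow A n i j ->
  exists p, [/\ size p = n, path step i p & last i p = j].
Proof.
elim: n i => [|n IH] i.
  by rewrite /mxpow /= mxE; case: eqP => // -> _; exists [::].
rewrite /mxpow /= -/(mxpow A n) mxE => pos.
have /existsP[k] : [exists k, 0 < A i k * mxpow A n k j].
  apply: contraLR pos => /existsPn nonpos; rewrite -leNgt.
  by apply: sumr_le0 => k _; rewrite leNgt nonpos.
have [->|Aik] := A01 i k; first by rewrite mul0r ltxx.
rewrite Aik mul1r => /IH[p [<- ip pj]].
by exists (k :: p); rewrite /= Aik eqxx.
Qed.

Hypothesis Aaper : aperiodic_mx A.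

(* Irreducibility is vacuous on the diagonal (take n = 0): aperiodicity is what
   provides a cycle of positive length. *)
Lemma exists_cycle j : exists q, [/\ (0 < size q)%N, path step j q & last j q = j].
Proof.
have [n [n0 pos]] : exists n, (0 < n)%N /\ 0 < mxpow A n j j.
  apply: contrapT => none; suff : 0%N = 1%N by [].
  by apply: (Aaper (i := j)) => n n0 pos; case: none; exists n.
have [q [qn jq qj]] := mxpow_path pos.
by exists q; rewrite qn.
Qed.

Hypothesis Airr : irreducible_mx A.

Lemma exists_bridge i j : exists c, allowed A (i :: rcons c j).
Proof.
have [n pos] := Airr i j.
have [p [_ ip pj]] := mxpow_path pos.
have [q [q0 jq qj]] := exists_cycle j.
have : path step i (p ++ q) /\ last i (p ++ q) = j.
  by rewrite cat_path last_cat pj ip jq qj.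
have : (0 < size (p ++ q))%N by rewrite size_cat addn_gt0 q0 orbT.
by case/lastP: (p ++ q) => // c y _; rewrite last_rcons => -[cy <-]; exists c.
Qed.

End Words.

Section Homogenization.
Variables (R : realType) (d : nat) (A : 'M[int]_d) (D : seq 'I_d -> R) (C : R).
Hypothesis D_qm : forall a b, allowed A (a ++ b) -> `|D (a ++ b) - D a - D b| <= C.

Lemma wpow_qadd a : periodic_word A a ->
  forall j k, `|D (wpow a (j + k)) - D (wpow a j) - D (wpow a k)| <= C.
Proof. by move=> pa j k; rewrite wpowD; apply: D_qm; rewrite -wpowD allowed_wpow. Qed.

Lemma Lbar_cvg a : periodic_word A a -> cvgn (fun k => D (wpow a k) / k%:R).
Proof. by move/wpow_qadd/qadd_cvg. Qed.

Lemma Lbar_dist a : periodic_word A a -> `|Lbar D a - D a| <= 2 * C.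
Proof. by move/wpow_qadd/qadd_lim_dist; rewrite wpow1. Qed.

Lemma Lbar_eq0_of_bounded C0 : (forall a, periodic_word A a -> `|D a| <= C0) ->
  forall a, periodic_word A a -> Lbar D a = 0.
Proof.
move=> DC0 a pa; apply: cvg_lim => //; apply: (@cvgn_div_bounded _ _ C0).
near=> k; have k0 : (0 < k)%N by near: k; exact: nbhs_infty_gt.
by rewrite -(prednK k0); apply/DC0/periodic_wpow.
Unshelve. all: by end_near.
Qed.

Lemma Lbar_eq0P : (forall a, periodic_word A a -> Lbar D a = 0) <->
  exists C0, forall a, periodic_word A a -> `|D a| <= C0.
Proof.
split=> [Lbar0 | [C0]]; last exact: Lbar_eq0_of_bounded.
by exists (2 * C) => a pa; have := Lbar_dist pa; rewrite Lbar0 // sub0r normrN.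
Qed.

Hypotheses (A01 : zero_one_mx A) (Aaper : aperiodic_mx A) (Airr : irreducible_mx A).

Lemma bounded_of_periodic_bounded C0 :
  (forall a, periodic_word A a -> `|D a| <= C0) ->
  exists C1, forall w, allowed A w -> `|D w| <= C1.
Proof.
move=> DC0.
pose c i j := xchoose (exists_bridge A01 Aaper Airr i j).
pose M := \big[Num.max/0]_(p : 'I_d * 'I_d) `|D (c p.1 p.2)|.
have M0 : 0 <= M := bigmax_ge_id _ _ _ _.
exists (C + `|C0| + M) => -[_ | x s xs].
  have := D_qm (a := [::]) (b := [::]) isT; rewrite /= subrr sub0r normrN => D0.
  by apply: le_trans D0 _; rewrite -addrA lerDl addr_ge0.
pose b := c (last x s) x.
have per : periodic_word A (x :: s ++ b).
  exact/(periodic_close xs)/(xchooseP (exists_bridge A01 Aaper Airr _ _)).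
have Db : `|D b| <= M := le_bigmax _ (fun p => `|D (c p.1 p.2)|) (last x s, x).
have := D_qm (a := x :: s) (periodic_allowed per).
have := DC0 _ per; have := ler_norm C0.
move: Db; rewrite !ler_norml => /andP[? ?] ? /andP[? ?] /andP[? ?].
by apply/andP; split; lra.
Qed.

End Homogenization.

Lemma quasimorphismB (R : realType) d (A : 'M[int]_d) (L L' : seq 'I_d -> R) :
  quasimorphism A L -> quasimorphism A L' -> quasimorphism A (fun w => L w - L' w).
Proof.
move=> [C LC] [C' LC']; exists (C + C') => a b ab.
have -> : L (a ++ b) - L' (a ++ b) - (L a - L' a) - (L b - L' b)
    = (L (a ++ b) - L a - L b) - (L' (a ++ b) - L' a - L' b) by ring.
by apply: le_trans (ler_normB _ _) _; rewrite lerD ?LC ?LC'.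
Qed.

Lemma LbarB (R : realType) d (A : 'M[int]_d) (L L' : seq 'I_d -> R) a :
  quasimorphism A L -> quasimorphism A L' -> periodic_word A a ->
  Lbar (fun w => L w - L' w) a = Lbar L a - Lbar L' a.
Proof.
move=> [C LC] [C' LC'] pa; rewrite /Lbar; under eq_fun do rewrite mulrBl.
exact: limB (Lbar_cvg LC pa) (Lbar_cvg LC' pa).
Qed.

Theorem mainTheorem9 (R : realType) (d : nat) (A : 'M[int]_d)
  (A01 : zero_one_mx A) (Airr : irreducible_mx A) (Aaper : aperiodic_mx A)
  (L L' : seq 'I_d -> R)
  (HL : quasimorphism A L) (HL' : quasimorphism A L') :
  (qm_equiv A L L' <->
     (forall a : seq 'I_d, periodic_word A a -> Lbar L a = Lbar L' a))
  /\
  (qm_equiv A L L' <->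
     (exists C : R, forall a : seq 'I_d, periodic_word A a ->
        `| L a - L' a | <= C)).
Proof.
have [C DC] := quasimorphismB HL HL'.
have bounded_periodic : qm_equiv A L L' <->
    exists C0, forall a, periodic_word A a -> `|L a - L' a| <= C0.
  split=> [[C0 LC0] | [C0]]; first by exists C0 => a /periodic_allowed/LC0.
  exact: bounded_of_periodic_bounded DC A01 Aaper Airr C0.
have Lbar_periodic : (forall a, periodic_word A a -> Lbar L a = Lbar L' a) <->
    exists C0, forall a, periodic_word A a -> `|L a - L' a| <= C0.
  rewrite -(Lbar_eq0P DC); split=> Lbar_eq a pa.
  - by rewrite (LbarB HL HL' pa) Lbar_eq // subrr.
  - by apply/eqP; rewrite -subr_eq0 -(LbarB HL HL' pa) Lbar_eq.
split; last exact: bounded_periodic.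
exact: iff_trans bounded_periodic (iff_sym Lbar_periodic).
Qed.
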